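(* Let $f=(f_1,f_2):\mathbb{R}^2\to\mathbb{R}^2$ be a smooth one-generic mapping and let $F=(F_1,F_2)$ be as in the context. A point $p\in S_1(f)$ is a simple cusp if and only if $F(p)=\mathbf{0}$ and $DF(p)\cdot\begin{bmatrix}-\frac{\partial J}{\partial y}(p)\\ \frac{\partial J}{\partial x}(p)\end{bmatrix}\ne\mathbf{0}$; equivalently, if and only if $J(p)=0$, $F_1(p)=0$, $F_2(p)=0$, and $\frac{\partial(J,F_1)}{\partial(x,y)}(p)\ne0$ or $\frac{\partial(J,F_2)}{\partial(x,y)}(p)\ne0$.
   Context: $J=\det Df$; $F_i=\frac{\partial(J,f_i)}{\partial(x,y)}=\frac{\partial J}{\partial x}\frac{\partial f_i}{\partial y}-\frac{\partial J}{\partial y}\frac{\partial f_i}{\partial x}$, i.e. $F=Df\cdot(-\partial J/\partial y,\partial J/\partial x)^T$. $f$ is one-generic if $j^1f$ is transverse to the corank-$r$ strata of the 1-jet space for all $r$ (equivalently $dJ\neq0$ on $J^{-1}(0)$, and then $S_1(f)=J^{-1}(0)$ where $S_1(f)=\{p:\operatorname{rank}Df(p)=1\}$). For $p\in S_1(f)$ with $T_pS_1(f)=\ker Df(p)$, $p$ is a simple cusp if $p$ is a simple zero of the function $dJ(\xi)$ on $S_1(f)$, where $\xi$ is a nonvanishing vector field along $S_1(f)$ near $p$ lying in $\ker Df$ (the order of this zero does not depend on the choice of $\xi$). *)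

From Stdlib Require Import Reals List.
From Coquelicot Require Import Coquelicot.
Open Scope R_scope.

Definition pdx (g : R -> R -> R) : R -> R -> R := fun x y => Derive (fun t => g t y) x.
Definition pdy (g : R -> R -> R) : R -> R -> R := fun x y => Derive (fun t => g x t) y.

Fixpoint ipd (l : list bool) (g : R -> R -> R) : R -> R -> R :=
  match l with
  | nil => g
  | b :: l' => (if b then pdx else pdy) (ipd l' g)
  end.

Definition smooth2 (g : R -> R -> R) : Prop :=
  forall (l : list bool) (x y : R), differentiable_pt (ipd l g) x y.

Definition smooth1 (g : R -> R) : Prop := forall (n : nat) (t : R), ex_derive_n g n t.

Definition Jac (f1 f2 : R -> R -> R) : R -> R -> R :=
  fun x y => pdx f1 x y * pdy f2 x y - pdy f1 x y * pdx f2 x y.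

Definition jac2 (A B : R -> R -> R) : R -> R -> R :=
  fun x y => pdx A x y * pdy B x y - pdy A x y * pdx B x y.

Definition Ffun (f1 f2 fi : R -> R -> R) : R -> R -> R := jac2 (Jac f1 f2) fi.

(* one-generic, in the equivalent form given in the context: dJ <> 0 on J^{-1}(0) *)
Definition one_generic (f1 f2 : R -> R -> R) : Prop :=
  forall x y, Jac f1 f2 x y = 0 ->
    ~ (pdx (Jac f1 f2) x y = 0 /\ pdy (Jac f1 f2) x y = 0).

(* S_1(f) : rank Df(p) = 1, i.e. det Df(p) = 0 and Df(p) <> 0 *)
Definition in_S1 (f1 f2 : R -> R -> R) (x y : R) : Prop :=
  Jac f1 f2 x y = 0 /\
  ~ (pdx f1 x y = 0 /\ pdy f1 x y = 0 /\ pdx f2 x y = 0 /\ pdy f2 x y = 0).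

Definition in_kerDf (f1 f2 : R -> R -> R) (x y v1 v2 : R) : Prop :=
  pdx f1 x y * v1 + pdy f1 x y * v2 = 0 /\ pdx f2 x y * v1 + pdy f2 x y * v2 = 0.

(* Simple cusp: p in S_1(f), T_p S_1(f) = ker Df(p), and p is a simple zero of dJ(xi)
   restricted to S_1(f), where xi is a nonvanishing smooth vector field along S_1(f)
   near p lying in ker Df.  S_1(f) near p is described by a smooth regular curve
   gamma = (g1,g2) with gamma(0) = p lying in S_1(f) = J^{-1}(0); the vector field
   along it is xi = (k1,k2); "simple zero" means h(0) = 0 and h'(0) <> 0 with
   h(t) = dJ_{gamma(t)}(xi(t)). *)
Definition simple_cusp (f1 f2 : R -> R -> R) (x0 y0 : R) : Prop :=
  in_S1 f1 f2 x0 y0 /\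
  exists (eps : R) (g1 g2 k1 k2 : R -> R),
    0 < eps /\
    smooth1 g1 /\ smooth1 g2 /\ smooth1 k1 /\ smooth1 k2 /\
    g1 0 = x0 /\ g2 0 = y0 /\
    ~ (Derive g1 0 = 0 /\ Derive g2 0 = 0) /\
    (forall t, -eps < t < eps ->
       Jac f1 f2 (g1 t) (g2 t) = 0 /\
       ~ (k1 t = 0 /\ k2 t = 0) /\
       in_kerDf f1 f2 (g1 t) (g2 t) (k1 t) (k2 t)) /\
    in_kerDf f1 f2 x0 y0 (Derive g1 0) (Derive g2 0) /\
    let h := fun t => pdx (Jac f1 f2) (g1 t) (g2 t) * k1 t
                      + pdy (Jac f1 f2) (g1 t) (g2 t) * k2 t in
    h 0 = 0 /\ Derive h 0 <> 0.

From Stdlib Require Import Reals Lra Lia List.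
From Stdlib Require Import FunctionalExtensionality IndefiniteDescription Classical.
From Coquelicot Require Import Coquelicot.
Open Scope R_scope.

(* Near p the fold curve S_1(f) = J^{-1}(0) is a smooth curve gamma (implicit function
   theorem, using dJ <> 0), and k = (-r_y, r_x) for a row r of Df with dr(p) <> 0 is a
   nonvanishing kernel field of Df along it. With h = dJ(k) and k' = (-k2, k1), the identity
     F_i |k|^2 = dJ(k) df_i(k') - dJ(k') df_i(k)
   becomes F_i |k|^2 = h m_i on gamma, where m_i = df_i(k'); m = (m_1, m_2) <> 0 because k is
   a nonzero kernel vector of Df(p) <> 0. Hence h(0) = 0 iff F(p) = 0, and then differentiating
   at 0 gives (dF_i . gamma'(0)) |k|^2 = h'(0) m_i. Since gamma'(0) spans ker dJ(p), it is a
   nonzero multiple of (-J_y, J_x), so h'(0) <> 0 iff DF(p) (-J_y, J_x) <> 0. Finally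
   Df(p) (-J_y, J_x) = F(p), so gamma'(0) lies in ker Df(p) as soon as F(p) = 0. *)

(** * Smooth functions of two variables *)

Lemma differentiable_pt_lim_linear (al be a b : R) :
  differentiable_pt_lim (fun s t => al * s + be * t) a b al be.
Proof.
  intros eps; exists eps; intros u v _ _.
  replace (al * u + be * v - (al * a + be * b) - (al * (u - a) + be * (v - b))) with 0 by ring.
  rewrite Rabs_R0. apply Rmult_le_pos; [apply Rlt_le, cond_pos|].
  apply Rle_trans with (Rabs (u - a)); [apply Rabs_pos | apply Rmax_l].
Qed.

Lemma differentiable_pt_lim_mult (a b : R) :
  differentiable_pt_lim (fun s t => s * t) a b b a.
Proof.
  intros eps; exists eps; intros u v Hu Hv.
  replace (u * v - a * b - (b * (u - a) + a * (v - b))) with ((u - a) * (v - b)) by ring.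
  rewrite Rabs_mult, Rmult_comm.
  pose proof (Rmax_l (Rabs (u - a)) (Rabs (v - b))).
  pose proof (Rmax_r (Rabs (u - a)) (Rabs (v - b))).
  apply Rmult_le_compat; try apply Rabs_pos; lra.
Qed.

Lemma differentiable_pt_lim_fst (a b : R) : differentiable_pt_lim (fun s _ => s) a b 1 0.
Proof.
  apply (differentiable_pt_lim_ext (fun s t => 1 * s + 0 * t)).
  - apply locally_2d_forall; intros; ring.
  - apply differentiable_pt_lim_linear.
Qed.

Lemma differentiable_pt_lim_snd (a b : R) : differentiable_pt_lim (fun _ t => t) a b 0 1.
Proof.
  apply (differentiable_pt_lim_ext (fun s t => 0 * s + 1 * t)).
  - apply locally_2d_forall; intros; ring.
  - apply differentiable_pt_lim_linear.
Qed.

Definition pd (b : bool) : (R -> R -> R) -> R -> R -> R := if b then pdx else pdy.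
Definition lin2 (al be : R) (u v : R -> R -> R) : R -> R -> R :=
  fun x y => al * u x y + be * v x y.
Definition mul2 (u v : R -> R -> R) : R -> R -> R := fun x y => u x y * v x y.

Lemma differentiable_pt_lin2 al be u v x y :
  differentiable_pt u x y -> differentiable_pt v x y -> differentiable_pt (lin2 al be u v) x y.
Proof.
  intros [ux [uy Hu]] [vx [vy Hv]]; do 2 eexists.
  apply (differentiable_pt_lim_comp (fun s t => al * s + be * t)); eauto.
  apply differentiable_pt_lim_linear.
Qed.

Lemma differentiable_pt_mul2 u v x y :
  differentiable_pt u x y -> differentiable_pt v x y -> differentiable_pt (mul2 u v) x y.
Proof.
  intros [ux [uy Hu]] [vx [vy Hv]]; do 2 eexists.
  apply (differentiable_pt_lim_comp (fun s t => s * t)); eauto.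
  apply differentiable_pt_lim_mult.
Qed.

Lemma differentiable_pt_swap u x y :
  differentiable_pt u y x -> differentiable_pt (fun a b => u b a) x y.
Proof.
  intros [ux [uy Hu]]; do 2 eexists.
  apply (differentiable_pt_lim_comp u (fun _ t => t) (fun s _ => s)); eauto.
  - apply differentiable_pt_lim_snd.
  - apply differentiable_pt_lim_fst.
Qed.

Lemma differentiable_pt_lim_pd g x y :
  differentiable_pt g x y -> differentiable_pt_lim g x y (pdx g x y) (pdy g x y).
Proof.
  intros [lx [ly H]].
  destruct (differentiable_pt_lim_unique g x y lx ly H) as [E1 E2].
  unfold pdx, pdy; rewrite E1, E2; exact H.
Qed.

Lemma is_derive_comp2 K g1 g2 t a b :
  differentiable_pt K (g1 t) (g2 t) -> is_derive g1 t a -> is_derive g2 t b ->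
  is_derive (fun s => K (g1 s) (g2 s)) t (pdx K (g1 t) (g2 t) * a + pdy K (g1 t) (g2 t) * b).
Proof.
  intros HK Ha Hb; apply is_derive_Reals, derivable_pt_lim_comp_2d.
  - apply differentiable_pt_lim_pd, HK.
  - apply is_derive_Reals, Ha.
  - apply is_derive_Reals, Hb.
Qed.

Lemma ex_derive_pdx g x y : differentiable_pt g x y -> ex_derive (fun t => g t y) x.
Proof.
  intros Hg; exists (pdx g x y * 1 + pdy g x y * 0).
  apply (is_derive_comp2 g (fun t => t) (fun _ => y)); [exact Hg| |].
  - apply is_derive_Reals, derivable_pt_lim_id.
  - apply is_derive_Reals, derivable_pt_lim_const.
Qed.

Lemma ex_derive_pdy g x y : differentiable_pt g x y -> ex_derive (fun t => g x t) y.
Proof.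
  intros Hg; exists (pdx g x y * 0 + pdy g x y * 1).
  apply (is_derive_comp2 g (fun _ => x) (fun t => t)); [exact Hg| |].
  - apply is_derive_Reals, derivable_pt_lim_const.
  - apply is_derive_Reals, derivable_pt_lim_id.
Qed.

Definition smooth2_upto (n : nat) (g : R -> R -> R) : Prop :=
  forall l, (length l <= n)%nat -> forall x y, differentiable_pt (ipd l g) x y.

Lemma ipd_rcons l b g : ipd (l ++ b :: nil) g = ipd l (pd b g).
Proof. induction l as [|c l IH]; simpl; [|rewrite IH]; reflexivity. Qed.

Lemma smooth2_upto_pd n b g : smooth2_upto (S n) g -> smooth2_upto n (pd b g).
Proof.
  intros H l Hl x y; rewrite <- ipd_rcons; apply H.
  rewrite length_app; simpl; lia.
Qed.

Lemma smooth2_upto_all g : smooth2 g <-> forall n, smooth2_upto n g.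
Proof.
  split; intros H; [intros n l _; apply H|intros l; apply (H (length l)); lia].
Qed.

Lemma smooth2_pd b g : smooth2 g -> smooth2 (pd b g).
Proof. intros H l x y; rewrite <- ipd_rcons; apply H. Qed.

Lemma smooth2_pdx g : smooth2 g -> smooth2 (pdx g).
Proof. apply (smooth2_pd true). Qed.

Lemma smooth2_pdy g : smooth2 g -> smooth2 (pdy g).
Proof. apply (smooth2_pd false). Qed.

Lemma smooth2_differentiable u x y : smooth2 u -> differentiable_pt u x y.
Proof. intros H; apply (H nil). Qed.

Lemma pd_lin2 b al be u v :
  (forall x y, differentiable_pt u x y) -> (forall x y, differentiable_pt v x y) ->
  pd b (lin2 al be u v) = lin2 al be (pd b u) (pd b v).
Proof.
  intros Hu Hv; do 2 (apply functional_extensionality; intro).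
  destruct b; cbv beta iota delta [pd lin2 pdx pdy];
    rewrite Derive_plus, !Derive_scal; auto;
    apply ex_derive_scal; auto using ex_derive_pdx, ex_derive_pdy.
Qed.

Lemma pd_mul2 b u v :
  (forall x y, differentiable_pt u x y) -> (forall x y, differentiable_pt v x y) ->
  pd b (mul2 u v) = lin2 1 1 (mul2 (pd b u) v) (mul2 u (pd b v)).
Proof.
  intros Hu Hv; do 2 (apply functional_extensionality; intro).
  destruct b; cbv beta iota delta [pd lin2 mul2 pdx pdy];
    rewrite Derive_mult, !Rmult_1_l; auto using ex_derive_pdx, ex_derive_pdy.
Qed.

Lemma ipd_lin2 n al be u v : smooth2_upto n u -> smooth2_upto n v ->
  forall l, (length l <= n)%nat -> ipd l (lin2 al be u v) = lin2 al be (ipd l u) (ipd l v).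
Proof.
  intros Hu Hv l; induction l as [|c l IH]; intros Hl; simpl in *; [reflexivity|].
  rewrite IH by lia.
  apply (pd_lin2 c); intros; [apply Hu|apply Hv]; lia.
Qed.

Lemma smooth2_upto_lin2 n al be u v :
  smooth2_upto n u -> smooth2_upto n v -> smooth2_upto n (lin2 al be u v).
Proof.
  intros Hu Hv l Hl x y; rewrite (ipd_lin2 n) by assumption.
  apply differentiable_pt_lin2; auto.
Qed.

Lemma smooth2_upto_mul2 n : forall u v,
  smooth2_upto n u -> smooth2_upto n v -> smooth2_upto n (mul2 u v).
Proof.
  induction n as [|n IH]; intros u v Hu Hv l Hl x y.
  - destruct l; [|simpl in Hl; lia].
    apply differentiable_pt_mul2; [apply (Hu nil)|apply (Hv nil)]; simpl; lia.
  - induction l as [|b l _] using rev_ind.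
    + apply differentiable_pt_mul2; [apply (Hu nil)|apply (Hv nil)]; simpl; lia.
    + rewrite length_app in Hl; simpl in Hl.
      assert (Hu' : smooth2_upto n u) by (intros l' Hl'; apply Hu; lia).
      assert (Hv' : smooth2_upto n v) by (intros l' Hl'; apply Hv; lia).
      rewrite ipd_rcons, pd_mul2 by (intros; first [apply (Hu nil)|apply (Hv nil)]; simpl; lia).
      apply (smooth2_upto_lin2 n); try lia; apply IH; auto using smooth2_upto_pd.
Qed.

Lemma smooth2_ext u v : smooth2 u -> (forall x y, u x y = v x y) -> smooth2 v.
Proof.
  intros Hu E; replace v with u; [exact Hu|].
  do 2 (apply functional_extensionality; intro); apply E.
Qed.

Lemma smooth2_lin2 al be u v : smooth2 u -> smooth2 v -> smooth2 (lin2 al be u v).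
Proof.
  rewrite !smooth2_upto_all; intros Hu Hv n; apply smooth2_upto_lin2; auto.
Qed.

Lemma smooth2_mul2 u v : smooth2 u -> smooth2 v -> smooth2 (mul2 u v).
Proof.
  rewrite !smooth2_upto_all; intros Hu Hv n; apply smooth2_upto_mul2; auto.
Qed.

Lemma smooth2_swap u : smooth2 u -> smooth2 (fun a b => u b a).
Proof.
  intros Hu l x y.
  replace (ipd l (fun a b => u b a)) with (fun a b => ipd (map negb l) u b a).
  - apply differentiable_pt_swap, Hu.
  - induction l as [|c l IH]; simpl; [|rewrite <- IH; destruct c]; reflexivity.
Qed.

Lemma smooth2_opp u : smooth2 u -> smooth2 (fun x y => - u x y).
Proof.
  intros Hu; apply smooth2_ext with (lin2 (-1) 0 u u).
  - apply smooth2_lin2; assumption.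
  - intros; unfold lin2; ring.
Qed.

Lemma smooth2_jac2 A B : smooth2 A -> smooth2 B -> smooth2 (jac2 A B).
Proof.
  intros HA HB.
  apply smooth2_ext with (lin2 1 (-1) (mul2 (pdx A) (pdy B)) (mul2 (pdy A) (pdx B))).
  - apply smooth2_lin2; apply smooth2_mul2; auto using smooth2_pdx, smooth2_pdy.
  - intros; unfold lin2, mul2, jac2; ring.
Qed.

Lemma smooth2_Jac f1 f2 : smooth2 f1 -> smooth2 f2 -> smooth2 (Jac f1 f2).
Proof. apply smooth2_jac2. Qed.

(** * Smooth functions of one variable *)

Fixpoint Ck (n : nat) (h : R -> R) : Prop :=
  match n with
  | O => True
  | S m => (forall t, ex_derive h t) /\ Ck m (Derive h)
  end.

Lemma Ck_pred n h : Ck (S n) h -> Ck n h.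
Proof.
  revert h; induction n as [|n IH]; intros h [H1 H2]; [exact I|].
  split; [exact H1|apply IH, H2].
Qed.

Lemma Ck_ext n h g : Ck n h -> (forall t, h t = g t) -> Ck n g.
Proof.
  intros H E; replace g with h; [exact H|apply functional_extensionality, E].
Qed.

Lemma Ck_lin n : forall al be a b,
  Ck n a -> Ck n b -> Ck n (fun t => al * a t + be * b t).
Proof.
  induction n as [|n IH]; intros al be a b Ha Hb; [exact I|].
  destruct Ha as [Ha1 Ha2], Hb as [Hb1 Hb2]; split.
  - intro t; apply (ex_derive_plus (fun t => al * a t) (fun t => be * b t));
      apply ex_derive_scal; auto.
  - apply Ck_ext with (fun t => al * Derive a t + be * Derive b t); [apply IH; assumption|].
    intro t; rewrite Derive_plus, !Derive_scal; auto; apply ex_derive_scal; auto.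
Qed.

Lemma Ck_mul n : forall a b, Ck n a -> Ck n b -> Ck n (fun t => a t * b t).
Proof.
  induction n as [|n IH]; intros a b Ha Hb; [exact I|].
  pose proof (Ck_pred _ _ Ha) as Ha0; pose proof (Ck_pred _ _ Hb) as Hb0.
  destruct Ha as [Ha1 Ha2], Hb as [Hb1 Hb2]; split.
  - intro t; apply ex_derive_mult; auto.
  - apply Ck_ext with (fun t => 1 * (Derive a t * b t) + 1 * (a t * Derive b t)).
    + apply Ck_lin; apply IH; assumption.
    + intro t; rewrite Derive_mult by auto; ring.
Qed.

Lemma Ck_const n c : Ck n (fun _ => c).
Proof.
  revert c; induction n as [|n IH]; intros c; [exact I|].
  split; [intro; apply ex_derive_const|].
  apply Ck_ext with (fun _ => 0); [apply IH|intro t; symmetry; apply Derive_const].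
Qed.

Lemma Ck_id n : Ck n (fun t => t).
Proof.
  destruct n; [exact I|].
  split; [intro; apply ex_derive_id|].
  apply Ck_ext with (fun _ => 1); [apply Ck_const|intro t; symmetry; apply Derive_id].
Qed.

Lemma Ck_inv n : forall a, (forall t, a t <> 0) -> Ck n a -> Ck n (fun t => / a t).
Proof.
  induction n as [|n IH]; intros a Hnz Ha; [exact I|].
  pose proof (Ck_pred _ _ Ha) as Ha0.
  destruct Ha as [Ha1 Ha2]; split.
  - intro t; apply ex_derive_inv; auto.
  - apply Ck_ext with (fun t => (-1) * (Derive a t * (/ a t * / a t)) + 0 * 0).
    + apply Ck_lin; [apply Ck_mul; [|apply Ck_mul; apply IH]|apply Ck_const]; assumption.
    + intro t; rewrite Derive_inv by auto; field; auto.
Qed.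

Lemma Ck_comp2 n : forall K g1 g2, smooth2 K -> Ck n g1 -> Ck n g2 ->
  Ck n (fun t => K (g1 t) (g2 t)).
Proof.
  induction n as [|n IH]; intros K g1 g2 HK H1 H2; [exact I|].
  pose proof (Ck_pred _ _ H1) as H10; pose proof (Ck_pred _ _ H2) as H20.
  destruct H1 as [H11 H12], H2 as [H21 H22].
  assert (D : forall t, is_derive (fun s => K (g1 s) (g2 s)) t
     (pdx K (g1 t) (g2 t) * Derive g1 t + pdy K (g1 t) (g2 t) * Derive g2 t)).
  { intro t; apply is_derive_comp2; auto using smooth2_differentiable, Derive_correct. }
  split; [intro t; eexists; apply D|].
  apply Ck_ext with (fun t => 1 * (pdx K (g1 t) (g2 t) * Derive g1 t)
                            + 1 * (pdy K (g1 t) (g2 t) * Derive g2 t)).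
  - apply Ck_lin; apply Ck_mul; auto; apply IH; auto using smooth2_pdx, smooth2_pdy.
  - intro t; symmetry; etransitivity; [apply (is_derive_unique _ _ _ (D t))|ring].
Qed.

Lemma Derive_n_Derive h n : Derive_n (Derive h) n = Derive_n h (S n).
Proof.
  apply functional_extensionality; intro t.
  rewrite <- Nat.add_1_r, <- Derive_n_comp; reflexivity.
Qed.

Lemma smooth1_Ck h : smooth1 h <-> forall n, Ck n h.
Proof.
  split.
  - intros H n; revert h H; induction n as [|n IH]; intros h H; [exact I|].
    split; [intro t; apply (H 1%nat)|].
    apply IH; intros [|m] t; [exact I|].
    simpl; rewrite Derive_n_Derive; apply (H (S (S m))).
  - intros H n t; destruct n as [|n]; [exact I|simpl].
    revert h H; induction n as [|n IH]; intros h H; [apply (H 1%nat)|].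
    rewrite <- Derive_n_Derive; apply IH; intro m; apply (H (S m)).
Qed.

Lemma smooth1_comp2 K g1 g2 : smooth2 K -> smooth1 g1 -> smooth1 g2 ->
  smooth1 (fun t => K (g1 t) (g2 t)).
Proof. rewrite !smooth1_Ck; intros; apply Ck_comp2; auto. Qed.

Lemma smooth1_ex_derive g t : smooth1 g -> ex_derive g t.
Proof. intros H; apply (H 1%nat). Qed.

Lemma smooth1_is_derive g t : smooth1 g -> is_derive g t (Derive g t).
Proof. intros H; apply Derive_correct, smooth1_ex_derive, H. Qed.

(** * Limits of increments *)

Definition lim0 (f : R -> R) (l : R) : Prop := is_lim f 0 l.

Lemma lim0_spec f l : lim0 f l <-> forall eps : posreal, exists d : posreal,
  forall h, Rabs h < d -> h <> 0 -> Rabs (f h - l) < eps.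
Proof.
  unfold lim0; rewrite <- is_lim_spec; simpl.
  split; intros H eps; destruct (H eps) as [d Hd]; exists d; intros h Hh Hh0; apply Hd; auto.
  - change (Rabs (h - 0) < d); rewrite Rminus_0_r; exact Hh.
  - change (Rabs (h - 0) < d) in Hh; rewrite Rminus_0_r in Hh; exact Hh.
Qed.

Lemma lim0_const c : lim0 (fun _ => c) c.
Proof. apply is_lim_const. Qed.

Lemma lim0_opp f a : lim0 f a -> lim0 (fun h => - f h) (- a).
Proof. apply (is_lim_opp f 0 a). Qed.

Lemma lim0_mult f g a b : lim0 f a -> lim0 g b -> lim0 (fun h => f h * g h) (a * b).
Proof. intros Ha Hb; apply (is_lim_mult f g 0 a b Ha Hb); exact I. Qed.

Lemma lim0_inv f a : lim0 f a -> a <> 0 -> lim0 (fun h => / f h) (/ a).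
Proof. intros Ha Hn; apply (is_lim_inv f 0 a Ha); intro E; injection E; auto. Qed.

Lemma lim0_ext f g l : lim0 f l -> (forall h, h <> 0 -> f h = g h) -> lim0 g l.
Proof.
  rewrite !lim0_spec; intros H E eps; destruct (H eps) as [d Hd].
  exists d; intros h Hh Hh0; rewrite <- E by auto; apply Hd; auto.
Qed.

Lemma lim0_squeeze u a w : lim0 w 0 -> (forall h, Rabs (u h - a) <= Rabs (w h)) -> lim0 u a.
Proof.
  rewrite !lim0_spec; intros Hw Hle eps; destruct (Hw eps) as [d Hd].
  exists d; intros h Hh Hh0.
  apply Rle_lt_trans with (Rabs (w h)); [apply Hle|].
  rewrite <- (Rminus_0_r (w h)); apply Hd; auto.
Qed.

Lemma lim0_comp2 F u v a b : continuity_2d_pt F a b -> lim0 u a -> lim0 v b ->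
  lim0 (fun h => F (u h) (v h)) (F a b).
Proof.
  rewrite !lim0_spec; intros HF Hu Hv eps.
  destruct (HF eps) as [d Hd], (Hu d) as [d1 H1], (Hv d) as [d2 H2].
  exists (mkposreal _ (Rmin_stable_in_posreal d1 d2)); simpl; intros h Hh Hh0.
  apply Hd; [apply H1|apply H2]; auto;
    apply Rlt_le_trans with (1 := Hh); [apply Rmin_l|apply Rmin_r].
Qed.

Lemma lim0_increment phi s d : is_derive phi s d -> lim0 (fun h => phi (s + h) - phi s) 0.
Proof.
  intros Hd; apply is_derive_Reals in Hd.
  pose proof (derivable_continuous_pt phi s (exist _ d Hd)) as Hc.
  apply lim0_spec; intros eps; destruct (Hc eps (cond_pos eps)) as [al [Hal H]].
  exists (mkposreal al Hal); simpl; intros h Hh Hh0.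
  rewrite Rminus_0_r; apply (H (s + h)); split.
  - split; [exact I|lra].
  - unfold R_dist; simpl; unfold R_dist; replace (s + h - s) with h by ring; exact Hh.
Qed.

Lemma lim0_diff_quot phi s d :
  is_derive phi s d -> lim0 (fun h => (phi (s + h) - phi s) / h) d.
Proof.
  intros Hd; apply is_derive_Reals in Hd; apply lim0_spec; intros eps.
  destruct (Hd eps (cond_pos eps)) as [al H]; exists al; intros h Hh Hh0; apply H; auto.
Qed.

Lemma is_derive_lim0 g s l : lim0 (fun h => (g (s + h) - g s) / h) l -> is_derive g s l.
Proof.
  intros H; apply is_derive_Reals; intros eps Heps.
  destruct (proj1 (lim0_spec _ _) H (mkposreal eps Heps)) as [d Hd].
  exists d; intros h Hh0 Hh; apply Hd; auto.
Qed.

(** * The implicit function theorem *)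

Lemma between_abs a b c : Rmin a b <= c <= Rmax a b -> Rabs (c - a) <= Rabs (b - a).
Proof.
  unfold Rmin, Rmax; destruct (Rle_dec a b); intros [H1 H2].
  - rewrite !Rabs_pos_eq by lra; lra.
  - rewrite !Rabs_left1 by lra; lra.
Qed.

Lemma between_ball a b c m d : Rabs (a - m) < d -> Rabs (b - m) < d ->
  Rmin a b <= c <= Rmax a b -> Rabs (c - m) < d.
Proof.
  intros Ha Hb; apply Rabs_def2 in Ha; apply Rabs_def2 in Hb.
  unfold Rmin, Rmax; destruct (Rle_dec a b); intros [H1 H2]; apply Rabs_def1; lra.
Qed.

Lemma is_derive_pdx K y t : smooth2 K -> is_derive (fun s => K s y) t (pdx K t y).
Proof. intros H; apply Derive_correct, ex_derive_pdx, smooth2_differentiable, H. Qed.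

Lemma is_derive_pdy K x t : smooth2 K -> is_derive (fun s => K x s) t (pdy K x t).
Proof. intros H; apply Derive_correct, ex_derive_pdy, smooth2_differentiable, H. Qed.

Lemma continuity_pt_is_derive f t d : is_derive f t d -> continuity_pt f t.
Proof.
  intros H; apply is_derive_Reals in H; apply (derivable_continuous_pt f t (exist _ d H)).
Qed.

Lemma mvt_pdx K y a b : smooth2 K ->
  exists c, Rmin a b <= c <= Rmax a b /\ K b y - K a y = pdx K c y * (b - a).
Proof.
  intros H; apply (MVT_gen (fun s => K s y) a b (fun c => pdx K c y)).
  - intros; apply is_derive_pdx, H.
  - intros z _; apply (continuity_pt_is_derive _ _ _ (is_derive_pdx K y z H)).
Qed.

Lemma mvt_pdy K x a b : smooth2 K ->
  exists c, Rmin a b <= c <= Rmax a b /\ K x b - K x a = pdy K x c * (b - a).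
Proof.
  intros H; apply (MVT_gen (fun s => K x s) a b (fun c => pdy K x c)).
  - intros; apply is_derive_pdy, H.
  - intros z _; apply (continuity_pt_is_derive _ _ _ (is_derive_pdy K x z H)).
Qed.

Lemma pdy_lower_increment K x a b c : smooth2 K -> a <= b ->
  (forall v, a <= v <= b -> c <= pdy K x v) -> c * (b - a) <= K x b - K x a.
Proof.
  intros SK Hab Hc; destruct (mvt_pdy K x a b SK) as [v [Hv E]].
  rewrite Rmin_left, Rmax_right in Hv by lra.
  rewrite E; apply Rmult_le_compat_r; [lra|apply Hc, Hv].
Qed.

Section Implicit_derivative.

Variables (K : R -> R -> R) (phi g : R -> R) (x0 y0 d c : R).
Hypotheses (SK : smooth2 K) (Hc : 0 < c)
  (Hbox : forall u v, Rabs (u - x0) < d -> Rabs (v - y0) < d -> c <= pdy K u v)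
  (Hin : forall t, Rabs (phi t - x0) < d /\ Rabs (g t - y0) < d)
  (HK : forall t, K (phi t) (g t) = 0).

(* Mean value theorem, first in x along the level y = g s, then in y. *)
Lemma implicit_increment s : exists chi xi : R -> R,
  (forall h, Rabs (chi h - phi s) <= Rabs (phi (s + h) - phi s)) /\
  (forall h, Rabs (xi h - g s) <= Rabs (g (s + h) - g s)) /\
  (forall h, c <= pdy K (phi (s + h)) (xi h)) /\
  (forall h, g (s + h) - g s =
     - (pdx K (chi h) (g s) * (phi (s + h) - phi s)) / pdy K (phi (s + h)) (xi h)).
Proof.
  destruct (functional_choice (fun h cc =>
    Rmin (phi s) (phi (s + h)) <= fst cc <= Rmax (phi s) (phi (s + h)) /\
    Rmin (g s) (g (s + h)) <= snd cc <= Rmax (g s) (g (s + h)) /\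
    K (phi (s + h)) (g s) - K (phi s) (g s) = pdx K (fst cc) (g s) * (phi (s + h) - phi s) /\
    K (phi (s + h)) (g (s + h)) - K (phi (s + h)) (g s)
      = pdy K (phi (s + h)) (snd cc) * (g (s + h) - g s))) as [cc Hcc].
  { intro h.
    destruct (mvt_pdx K (g s) (phi s) (phi (s + h)) SK) as [a [Ha Ea]].
    destruct (mvt_pdy K (phi (s + h)) (g s) (g (s + h)) SK) as [b [Hb Eb]].
    exists (a, b); auto. }
  exists (fun h => fst (cc h)), (fun h => snd (cc h)).
  assert (Kyc : forall h, c <= pdy K (phi (s + h)) (snd (cc h))).
  { intro h; destruct (Hcc h) as [_ [Hb _]].
    apply Hbox; [apply Hin|apply (between_ball (g s) (g (s + h))); auto; apply Hin]. }
  repeat split; intro h; destruct (Hcc h) as [Ha [Hb [Ea Eb]]]; auto using between_abs.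
  rewrite !HK in Eb, Ea.
  assert (pdy K (phi (s + h)) (snd (cc h)) <> 0) by (specialize (Kyc h); lra).
  field_simplify_eq; auto; lra.
Qed.

Lemma is_derive_implicit s dphi : is_derive phi s dphi ->
  is_derive g s (- pdx K (phi s) (g s) * dphi / pdy K (phi s) (g s)).
Proof.
  intros Dphi.
  destruct (implicit_increment s) as [chi [xi [Hchi [Hxi [Kyc Eh]]]]].
  assert (Kyn : forall h, pdy K (phi (s + h)) (xi h) <> 0) by (intro h; specialize (Kyc h); lra).
  pose proof (lim0_increment phi s dphi Dphi) as Lphi.
  assert (Lphi' : lim0 (fun h => phi (s + h)) (phi s)).
  { apply (lim0_squeeze _ _ _ Lphi); intro; apply Rle_refl. }
  assert (LKx : lim0 (fun h => pdx K (chi h) (g s)) (pdx K (phi s) (g s))).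
  { apply (lim0_comp2 (pdx K) chi (fun _ => g s)); [|apply (lim0_squeeze _ _ _ Lphi Hchi)|].
    - apply differentiable_continuity_pt, smooth2_differentiable, smooth2_pdx, SK.
    - apply lim0_const. }
  assert (Lg : lim0 (fun h => g (s + h) - g s) 0).
  { apply (lim0_squeeze _ _ (fun h => pdx K (chi h) (g s) * (phi (s + h) - phi s) * / c)).
    - replace 0 with (pdx K (phi s) (g s) * 0 * / c) by ring.
      apply lim0_mult; [apply lim0_mult; auto|apply lim0_const].
    - intro h; rewrite Rminus_0_r, Eh; unfold Rdiv.
      specialize (Kyc h).
      rewrite !Rabs_mult, Rabs_Ropp, !Rabs_mult, (Rabs_pos_eq (/ c)), Rabs_inv,
        (Rabs_pos_eq (pdy K _ _)) by (lra || apply Rlt_le, Rinv_0_lt_compat, Hc).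
      apply Rmult_le_compat_l; [apply Rmult_le_pos; apply Rabs_pos|].
      apply Rinv_le_contravar; auto. }
  assert (LKy : lim0 (fun h => pdy K (phi (s + h)) (xi h)) (pdy K (phi s) (g s))).
  { apply lim0_comp2; [|exact Lphi'|apply (lim0_squeeze _ _ _ Lg Hxi)].
    apply differentiable_continuity_pt, smooth2_differentiable, smooth2_pdy, SK. }
  apply is_derive_lim0, (lim0_ext (fun h =>
    - pdx K (chi h) (g s) * ((phi (s + h) - phi s) / h) * / pdy K (phi (s + h)) (xi h))).
  - apply lim0_mult; [apply lim0_mult; [apply lim0_opp, LKx|apply lim0_diff_quot, Dphi]|].
    apply lim0_inv; [exact LKy|].
    assert (c <= pdy K (phi s) (g s)) by (apply Hbox; apply Hin); lra.
  - intros h Hh; rewrite Eh; field; auto.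
Qed.

Lemma smooth1_implicit : smooth1 phi -> smooth1 g.
Proof.
  intros Sphi.
  assert (Kyn : forall s, pdy K (phi s) (g s) <> 0).
  { intro s; assert (c <= pdy K (phi s) (g s)) by (apply Hbox; apply Hin); lra. }
  assert (Dg : forall s,
    is_derive g s (- pdx K (phi s) (g s) * Derive phi s / pdy K (phi s) (g s)))
    by (intro s; apply is_derive_implicit, smooth1_is_derive, Sphi).
  rewrite smooth1_Ck in *; intros n; induction n as [|n IH]; [exact I|split].
  - intro t; eexists; apply Dg.
  - apply Ck_ext with (fun s => (-1) * (pdx K (phi s) (g s)
                         * (Derive phi s * / pdy K (phi s) (g s))) + 0 * 0).
    + apply Ck_lin; [|apply Ck_const].
      apply Ck_mul; [apply Ck_comp2; auto using smooth2_pdx|].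
      apply Ck_mul; [apply (proj2 (Sphi (S n)))|].
      apply Ck_inv; [exact Kyn|apply Ck_comp2; auto using smooth2_pdy].
    + intro s; rewrite (is_derive_unique _ _ _ (Dg s)); field; auto.
Qed.

End Implicit_derivative.

Definition squash (s : R) : R := s / (1 + s * s).

Lemma squash_bound s : Rabs (squash s) <= 1 / 2.
Proof.
  unfold squash; assert (P : 0 < 1 + s * s) by nra.
  assert (Q : s / (1 + s * s) * (1 + s * s) = s) by (field; lra).
  set (q := s / (1 + s * s)) in *.
  apply Rabs_le; split.
  - assert (0 <= (1 + s) * (1 + s)) by apply Rle_0_sqr; nra.
  - assert (0 <= (1 - s) * (1 - s)) by apply Rle_0_sqr; nra.
Qed.

Lemma smooth1_squash : smooth1 squash.
Proof.
  apply smooth1_Ck; intro n; unfold squash.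
  apply Ck_mul; [apply Ck_id|apply Ck_inv; [intro t; nra|]].
  apply Ck_ext with (fun t => 1 * 1 + 1 * (t * t)); [|intro; ring].
  apply Ck_lin; [apply Ck_const|apply Ck_mul; apply Ck_id].
Qed.

Lemma is_derive_squash0 : is_derive squash 0 1.
Proof. unfold squash; auto_derive; [nra|field]. Qed.

Lemma implicit_box K x0 y0 : smooth2 K -> K x0 y0 = 0 -> 0 < pdy K x0 y0 ->
  exists d c r et, 0 < c /\ 0 < r < d /\ 0 < et <= d /\
    (forall u v, Rabs (u - x0) < d -> Rabs (v - y0) < d -> c <= pdy K u v) /\
    (forall x, Rabs (x - x0) < et -> K x (y0 - r) < 0 < K x (y0 + r)).
Proof.
  intros SK HK0 Hc0; set (c0 := pdy K x0 y0) in *.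
  destruct (differentiable_continuity_pt (pdy K) x0 y0
              (smooth2_differentiable _ _ _ (smooth2_pdy _ SK)) (mkposreal (c0 / 2) ltac:(lra)))
    as [d Hd]; simpl in Hd.
  assert (Hbox : forall u v, Rabs (u - x0) < d -> Rabs (v - y0) < d -> c0 / 2 <= pdy K u v).
  { intros u v Hu Hv; specialize (Hd u v Hu Hv); apply Rabs_def2 in Hd; fold c0 in Hd; lra. }
  pose proof (cond_pos d) as Hdpos; set (r := d / 2).
  assert (Kr : forall e, 0 < e < d -> K x0 (y0 - e) < 0 < K x0 (y0 + e)).
  { intros e He.
    assert (Hb : forall v, y0 - e <= v <= y0 + e -> c0 / 2 <= pdy K x0 v)
      by (intros v Hv; apply Hbox; [rewrite Rminus_diag, Rabs_R0|apply Rabs_def1]; lra).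
    pose proof (pdy_lower_increment K x0 (y0 - e) y0 (c0 / 2) SK ltac:(lra)
                  ltac:(intros; apply Hb; lra)).
    pose proof (pdy_lower_increment K x0 y0 (y0 + e) (c0 / 2) SK ltac:(lra)
                  ltac:(intros; apply Hb; lra)).
    split; nra. }
  destruct (Kr r) as [Kn Kp]; [unfold r; lra|].
  destruct (differentiable_continuity_pt K x0 (y0 + r) (smooth2_differentiable _ _ _ SK)
              (mkposreal _ Kp)) as [dp Hdp]; simpl in Hdp.
  destruct (differentiable_continuity_pt K x0 (y0 - r) (smooth2_differentiable _ _ _ SK)
              (mkposreal (- K x0 (y0 - r)) ltac:(lra))) as [dn Hdn]; simpl in Hdn.
  exists d, (c0 / 2), r, (Rmin d (Rmin dp dn)).
  pose proof (cond_pos dp); pose proof (cond_pos dn).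
  pose proof (Rmin_l d (Rmin dp dn)); pose proof (Rmin_r d (Rmin dp dn)).
  pose proof (Rmin_l dp dn); pose proof (Rmin_r dp dn).
  assert (0 < Rmin d (Rmin dp dn)) by (apply Rmin_pos; [|apply Rmin_pos]; lra).
  repeat split; auto; unfold r in *; try lra.
  - specialize (Hdn x (y0 - d / 2) ltac:(lra) ltac:(rewrite Rminus_diag, Rabs_R0; lra)).
    apply Rabs_def2 in Hdn; lra.
  - specialize (Hdp x (y0 + d / 2) ltac:(lra) ltac:(rewrite Rminus_diag, Rabs_R0; lra)).
    apply Rabs_def2 in Hdp; lra.
Qed.

(* The curve is the graph of the implicit function over x0 + et * squash, which keeps it
   defined (and smooth) on the whole real line. *)
Lemma implicit_curve_pos K x0 y0 : smooth2 K -> K x0 y0 = 0 -> 0 < pdy K x0 y0 ->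
  exists g1 g2 : R -> R, smooth1 g1 /\ smooth1 g2 /\ g1 0 = x0 /\ g2 0 = y0 /\
    Derive g1 0 <> 0 /\ forall t, K (g1 t) (g2 t) = 0.
Proof.
  intros SK HK0 Hc0.
  destruct (implicit_box K x0 y0 SK HK0 Hc0) as [d [c [r [et [Hc [Hr [Het [Hbox Hsign]]]]]]]].
  set (phi := fun s => x0 + et * squash s).
  assert (Hphi : forall s, Rabs (phi s - x0) < et).
  { intro s; unfold phi; replace (x0 + et * squash s - x0) with (et * squash s) by ring.
    rewrite Rabs_mult, (Rabs_pos_eq et) by lra; pose proof (squash_bound s); nra. }
  assert (Hex : forall s, {y | y0 - r <= y <= y0 + r /\ K (phi s) y = 0}).
  { intro s; destruct (Hsign (phi s)) as [Kn Kp]; [specialize (Hphi s); lra|].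
    apply (IVT (fun y => K (phi s) y)); auto; [|lra].
    intro y; apply (continuity_pt_is_derive _ _ _ (is_derive_pdy K (phi s) y SK)). }
  set (g := fun s => proj1_sig (Hex s)).
  assert (Hg : forall s, y0 - r <= g s <= y0 + r /\ K (phi s) (g s) = 0)
    by (intro s; exact (proj2_sig (Hex s))).
  clearbody g.
  assert (Hin : forall t, Rabs (phi t - x0) < d /\ Rabs (g t - y0) < d).
  { intro t; split; [specialize (Hphi t); lra|].
    destruct (Hg t) as [[A B] _]; apply Rabs_def1; lra. }
  assert (phi0 : phi 0 = x0) by (unfold phi, squash; field_simplify; lra).
  assert (Sphi : smooth1 phi).
  { apply smooth1_Ck; intro n.
    apply Ck_ext with (fun s => 1 * x0 + et * squash s); [|intro; unfold phi; ring].
    apply Ck_lin; [apply Ck_const|apply smooth1_Ck, smooth1_squash]. }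
  exists phi, g; repeat split.
  - exact Sphi.
  - apply (smooth1_implicit K phi g x0 y0 d c); auto; intro t; apply Hg.
  - exact phi0.
  - (* g 0 = y0 since K x0 is strictly increasing on the box *)
    destruct (mvt_pdy K x0 y0 (g 0) SK) as [v [Hv E]].
    rewrite HK0, <- phi0, (proj2 (Hg 0)) in E.
    assert (c <= pdy K (phi 0) v).
    { apply Hbox; [apply Hin|apply (between_ball y0 (g 0)); [..|exact Hv]];
        [rewrite Rminus_diag, Rabs_R0; lra|apply Hin]. }
    nra.
  - assert (Dphi : is_derive phi 0 (0 + et * 1)).
    { apply (is_derive_plus (fun _ => x0) (fun s => et * squash s));
        [apply is_derive_Reals, derivable_pt_lim_const|apply is_derive_scal, is_derive_squash0]. }
    rewrite (is_derive_unique _ _ _ Dphi); lra.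
  - intro t; apply Hg.
Qed.

Lemma implicit_curve_y K x0 y0 : smooth2 K -> K x0 y0 = 0 -> pdy K x0 y0 <> 0 ->
  exists g1 g2 : R -> R, smooth1 g1 /\ smooth1 g2 /\ g1 0 = x0 /\ g2 0 = y0 /\
    Derive g1 0 <> 0 /\ forall t, K (g1 t) (g2 t) = 0.
Proof.
  intros SK HK0 Hy; destruct (Rlt_or_le 0 (pdy K x0 y0)) as [P|N].
  - apply implicit_curve_pos; auto.
  - destruct (implicit_curve_pos (fun x y => - K x y) x0 y0) as [g1 [g2 [? [? [? [? [? Z]]]]]]].
    + apply smooth2_opp, SK.
    + rewrite HK0; ring.
    + unfold pdy; rewrite Derive_opp; change (0 < - pdy K x0 y0); lra.
    + exists g1, g2; repeat split; auto; intro t; specialize (Z t); lra.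
Qed.

Lemma implicit_curve K x0 y0 : smooth2 K -> K x0 y0 = 0 ->
  ~ (pdx K x0 y0 = 0 /\ pdy K x0 y0 = 0) ->
  exists g1 g2 : R -> R, smooth1 g1 /\ smooth1 g2 /\ g1 0 = x0 /\ g2 0 = y0 /\
    ~ (Derive g1 0 = 0 /\ Derive g2 0 = 0) /\ forall t, K (g1 t) (g2 t) = 0.
Proof.
  intros SK HK0 HdK; destruct (Req_dec (pdy K x0 y0) 0) as [Hy|Hy].
  - assert (Hx : pdx K x0 y0 <> 0) by tauto.
    destruct (implicit_curve_y (fun a b => K b a) y0 x0) as [h1 [h2 [? [? [? [? [D Z]]]]]]];
      auto using smooth2_swap.
    exists h2, h1; repeat split; auto; tauto.
  - destruct (implicit_curve_y K x0 y0) as [g1 [g2 [? [? [? [? [D Z]]]]]]]; auto.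
    exists g1, g2; repeat split; auto; tauto.
Qed.

(** * Directional derivatives along the fold curve *)

Definition dir_derive (A : R -> R -> R) (x y v1 v2 : R) : R :=
  pdx A x y * v1 + pdy A x y * v2.

Definition dir_derive_along (A : R -> R -> R) (g1 g2 k1 k2 : R -> R) (t : R) : R :=
  dir_derive A (g1 t) (g2 t) (k1 t) (k2 t).

Lemma dir_derive_scal A x y l v1 v2 :
  dir_derive A x y (l * v1) (l * v2) = l * dir_derive A x y v1 v2.
Proof. unfold dir_derive; ring. Qed.

Lemma jac2_dir_derive A B x y : jac2 A B x y = dir_derive B x y (- pdy A x y) (pdx A x y).
Proof. unfold jac2, dir_derive; ring. Qed.

Lemma jac2_norm2 A B x y k1 k2 :
  jac2 A B x y * (k1 * k1 + k2 * k2) =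
  dir_derive A x y k1 k2 * dir_derive B x y (- k2) k1
  - dir_derive A x y (- k2) k1 * dir_derive B x y k1 k2.
Proof. unfold jac2, dir_derive; ring. Qed.

Lemma norm2_neq0 a b : ~ (a = 0 /\ b = 0) -> a * a + b * b <> 0.
Proof. intros H E; apply H, Rplus_sqr_eq_0; exact E. Qed.

Lemma dir_derive_frame_eq0 A x y k1 k2 : ~ (k1 = 0 /\ k2 = 0) ->
  dir_derive A x y k1 k2 = 0 -> dir_derive A x y (- k2) k1 = 0 ->
  pdx A x y = 0 /\ pdy A x y = 0.
Proof.
  unfold dir_derive; intros Hk H1 H2; pose proof (norm2_neq0 _ _ Hk) as N.
  set (a := pdx A x y) in *; set (b := pdy A x y) in *.
  split; apply (Rmult_eq_reg_r (k1 * k1 + k2 * k2)); auto.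
  - transitivity (k1 * (a * k1 + b * k2) - k2 * (a * - k2 + b * k1)); [ring|rewrite H1, H2; ring].
  - transitivity (k2 * (a * k1 + b * k2) + k1 * (a * - k2 + b * k1)); [ring|rewrite H1, H2; ring].
Qed.

Lemma dir_derive_eq0_colinear A x y d1 d2 : ~ (pdx A x y = 0 /\ pdy A x y = 0) ->
  dir_derive A x y d1 d2 = 0 -> exists l, d1 = l * (- pdy A x y) /\ d2 = l * pdx A x y.
Proof.
  unfold dir_derive; intros HA Hd; pose proof (norm2_neq0 _ _ HA) as N.
  set (a := pdx A x y) in *; set (b := pdy A x y) in *.
  exists ((a * d2 - b * d1) / (a * a + b * b)); split; field_simplify_eq; auto.
  - transitivity (d1 * b ^ 2 - a * d2 * b + a * (a * d1 + b * d2)); [ring|rewrite Hd; ring].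
  - transitivity (d2 * a ^ 2 - a * b * d1 + b * (a * d1 + b * d2)); [ring|rewrite Hd; ring].
Qed.

Lemma ex_derive_dir_derive_along A g1 g2 k1 k2 t : smooth2 A ->
  smooth1 g1 -> smooth1 g2 -> smooth1 k1 -> smooth1 k2 ->
  ex_derive (dir_derive_along A g1 g2 k1 k2) t.
Proof.
  intros SA S1 S2 Sk1 Sk2.
  apply (ex_derive_plus (fun t => pdx A (g1 t) (g2 t) * k1 t)
                        (fun t => pdy A (g1 t) (g2 t) * k2 t));
    apply ex_derive_mult; auto using smooth1_ex_derive; eexists;
    apply is_derive_comp2; auto using smooth1_is_derive, smooth2_differentiable,
      smooth2_pdx, smooth2_pdy.
Qed.

Lemma ex_derive_norm2 k1 k2 t : ex_derive k1 t -> ex_derive k2 t ->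
  ex_derive (fun t => k1 t * k1 t + k2 t * k2 t) t.
Proof.
  intros; apply (ex_derive_plus (fun t => k1 t * k1 t) (fun t => k2 t * k2 t));
    apply ex_derive_mult; assumption.
Qed.

Lemma is_derive_eq0_near f l eps : 0 < eps -> (forall t, -eps < t < eps -> f t = 0) ->
  is_derive f 0 l -> l = 0.
Proof.
  intros He Hf Hl.
  assert (L : locally 0 (fun t => f t = 0)).
  { exists (mkposreal eps He); intros t Ht; apply Hf.
    change (Rabs (t - 0) < eps) in Ht; apply Rabs_def2 in Ht; lra. }
  apply (is_derive_ext_loc f (fun _ => 0) 0 l L) in Hl.
  rewrite <- (is_derive_unique _ _ _ Hl); apply Derive_const.
Qed.

Lemma dir_derive_tangent A g1 g2 eps : smooth2 A -> smooth1 g1 -> smooth1 g2 -> 0 < eps ->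
  (forall t, -eps < t < eps -> A (g1 t) (g2 t) = 0) ->
  dir_derive A (g1 0) (g2 0) (Derive g1 0) (Derive g2 0) = 0.
Proof.
  intros SA S1 S2 He HA; apply (is_derive_eq0_near _ _ eps He HA).
  apply is_derive_comp2; auto using smooth1_is_derive, smooth2_differentiable.
Qed.

(* Along the curve, the identity jac2_norm2 with k in the kernel of dB reads
   jac2 J B |k|^2 = h m with h = dJ(k) and m = dB(k'); differentiate it at 0. *)
Lemma jac2_along_kernel J B g1 g2 k1 k2 eps :
  smooth2 J -> smooth2 B -> smooth1 g1 -> smooth1 g2 -> smooth1 k1 -> smooth1 k2 -> 0 < eps ->
  (forall t, -eps < t < eps -> dir_derive_along B g1 g2 k1 k2 t = 0) ->
  ~ (k1 0 = 0 /\ k2 0 = 0) -> dir_derive_along J g1 g2 k1 k2 0 = 0 ->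
  jac2 J B (g1 0) (g2 0) = 0 /\
  dir_derive (jac2 J B) (g1 0) (g2 0) (Derive g1 0) (Derive g2 0) * (k1 0 * k1 0 + k2 0 * k2 0)
    = Derive (dir_derive_along J g1 g2 k1 k2) 0 * dir_derive B (g1 0) (g2 0) (- k2 0) (k1 0).
Proof.
  intros SJ SB S1 S2 Sk1 Sk2 He Hker Hk0 Hh0.
  set (h := dir_derive_along J g1 g2 k1 k2).
  set (m := dir_derive_along B g1 g2 (fun t => - k2 t) k1).
  set (N := fun t => k1 t * k1 t + k2 t * k2 t).
  assert (Id : forall t, -eps < t < eps -> jac2 J B (g1 t) (g2 t) * N t - h t * m t = 0).
  { intros t Ht; unfold N, h, m, dir_derive_along; rewrite jac2_norm2.
    unfold dir_derive_along in Hker; rewrite Hker by exact Ht; ring. }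
  assert (A0 : jac2 J B (g1 0) (g2 0) = 0).
  { apply (Rmult_eq_reg_r (N 0)); [|apply norm2_neq0, Hk0].
    pose proof (Id 0 ltac:(lra)) as I0; unfold h in I0; rewrite Hh0 in I0; lra. }
  split; [exact A0|].
  assert (Sm : smooth1 (fun t => - k2 t)).
  { apply smooth1_Ck; intro n; apply Ck_ext with (fun t => -1 * k2 t + 0 * 0); [|intro; ring].
    apply Ck_lin; [apply smooth1_Ck, Sk2|apply Ck_const]. }
  assert (DP : is_derive (fun t => jac2 J B (g1 t) (g2 t) * N t - h t * m t) 0
     (dir_derive (jac2 J B) (g1 0) (g2 0) (Derive g1 0) (Derive g2 0) * N 0
      + jac2 J B (g1 0) (g2 0) * Derive N 0 - (Derive h 0 * m 0 + h 0 * Derive m 0))).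
  { assert (dA : is_derive (fun t => jac2 J B (g1 t) (g2 t)) 0
      (dir_derive (jac2 J B) (g1 0) (g2 0) (Derive g1 0) (Derive g2 0)))
      by (apply is_derive_comp2;
          auto using smooth1_is_derive, smooth2_differentiable, smooth2_jac2).
    assert (dN : is_derive N 0 (Derive N 0))
      by (apply Derive_correct, ex_derive_norm2; apply smooth1_ex_derive; assumption).
    assert (dh : is_derive h 0 (Derive h 0))
      by (apply Derive_correct, ex_derive_dir_derive_along; auto).
    assert (dm : is_derive m 0 (Derive m 0))
      by (apply Derive_correct, ex_derive_dir_derive_along; auto).
    apply (is_derive_minus (fun t => jac2 J B (g1 t) (g2 t) * N t) (fun t => h t * m t));
      [apply (is_derive_mult (fun t => jac2 J B (g1 t) (g2 t)) N)|apply (is_derive_mult h m)];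
      auto; intros; apply Rmult_comm. }
  apply (is_derive_eq0_near _ _ eps He Id) in DP.
  unfold h in DP; rewrite A0, Hh0 in DP.
  change (m 0) with (dir_derive B (g1 0) (g2 0) (- k2 0) (k1 0)) in DP.
  change (N 0) with (k1 0 * k1 0 + k2 0 * k2 0) in DP; unfold h; lra.
Qed.

(** * The cusp criterion *)

Definition cusp_criterion (f1 f2 : R -> R -> R) (x0 y0 : R) : Prop :=
  Ffun f1 f2 f1 x0 y0 = 0 /\ Ffun f1 f2 f2 x0 y0 = 0 /\
  ~ (dir_derive (Ffun f1 f2 f1) x0 y0 (- pdy (Jac f1 f2) x0 y0) (pdx (Jac f1 f2) x0 y0) = 0 /\
     dir_derive (Ffun f1 f2 f2) x0 y0 (- pdy (Jac f1 f2) x0 y0) (pdx (Jac f1 f2) x0 y0) = 0).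

Lemma in_kerDf_rotated f1 f2 x y k1 k2 :
  ~ (pdx f1 x y = 0 /\ pdy f1 x y = 0 /\ pdx f2 x y = 0 /\ pdy f2 x y = 0) ->
  ~ (k1 = 0 /\ k2 = 0) -> in_kerDf f1 f2 x y k1 k2 ->
  ~ (dir_derive f1 x y (- k2) k1 = 0 /\ dir_derive f2 x y (- k2) k1 = 0).
Proof.
  intros HS Hk [Ker1 Ker2] [M1 M2]; apply HS.
  destruct (dir_derive_frame_eq0 f1 x y k1 k2 Hk Ker1 M1).
  destruct (dir_derive_frame_eq0 f2 x y k1 k2 Hk Ker2 M2).
  auto.
Qed.

(* By jac2_norm2, F_i |k|^2 = dJ(k) df_i(k') at a kernel vector k, and df(k') <> 0. *)
Lemma dir_derive_kernel_eq0 J f1 f2 x y k1 k2 :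
  ~ (pdx f1 x y = 0 /\ pdy f1 x y = 0 /\ pdx f2 x y = 0 /\ pdy f2 x y = 0) ->
  ~ (k1 = 0 /\ k2 = 0) -> in_kerDf f1 f2 x y k1 k2 ->
  jac2 J f1 x y = 0 -> jac2 J f2 x y = 0 -> dir_derive J x y k1 k2 = 0.
Proof.
  intros HS Hk HK F1z F2z.
  destruct (Req_dec (dir_derive J x y k1 k2) 0) as [|Hh]; [assumption|exfalso].
  apply (in_kerDf_rotated f1 f2 x y k1 k2 HS Hk HK).
  pose proof (jac2_norm2 J f1 x y k1 k2) as I1; pose proof (jac2_norm2 J f2 x y k1 k2) as I2.
  destruct HK as [Ker1 Ker2].
  change (dir_derive f1 x y k1 k2 = 0) in Ker1; change (dir_derive f2 x y k1 k2 = 0) in Ker2.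
  rewrite F1z, Ker1 in I1; rewrite F2z, Ker2 in I2.
  split; apply (Rmult_eq_reg_l (dir_derive J x y k1 k2)); auto; lra.
Qed.

Lemma simple_cusp_criterion f1 f2 x0 y0 : smooth2 f1 -> smooth2 f2 -> one_generic f1 f2 ->
  simple_cusp f1 f2 x0 y0 -> cusp_criterion f1 f2 x0 y0.
Proof.
  intros S1 S2 Hgen [[HJ HS] [eps [g1 [g2 [k1 [k2 [He [Sg1 [Sg2 [Sk1 [Sk2
    [E1 [E2 [_ [Hloc [_ [Hh0 Hdh]]]]]]]]]]]]]]]]].
  change (dir_derive_along (Jac f1 f2) g1 g2 k1 k2 0 = 0) in Hh0.
  change (Derive (dir_derive_along (Jac f1 f2) g1 g2 k1 k2) 0 <> 0) in Hdh.
  pose proof (smooth2_Jac f1 f2 S1 S2) as SJ.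
  destruct (Hloc 0 ltac:(lra)) as [_ [Hk0 [Ker1 Ker2]]].
  destruct (jac2_along_kernel (Jac f1 f2) f1 g1 g2 k1 k2 eps) as [F1z D1];
    auto; [intros t Ht; apply (Hloc t Ht)|].
  destruct (jac2_along_kernel (Jac f1 f2) f2 g1 g2 k1 k2 eps) as [F2z D2];
    auto; [intros t Ht; apply (Hloc t Ht)|].
  destruct (dir_derive_eq0_colinear (Jac f1 f2) x0 y0 (Derive g1 0) (Derive g2 0))
    as [l [L1 L2]]; [apply Hgen, HJ|rewrite <- E1, <- E2; eapply dir_derive_tangent; eauto;
                                    intros t Ht; apply (Hloc t Ht)|].
  rewrite E1, E2, L1, L2, dir_derive_scal in *.
  unfold cusp_criterion, Ffun; repeat split; auto; intros [V1 V2].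
  rewrite V1, Rmult_0_r, Rmult_0_l in D1; rewrite V2, Rmult_0_r, Rmult_0_l in D2.
  apply (in_kerDf_rotated f1 f2 x0 y0 (k1 0) (k2 0) HS Hk0 (conj Ker1 Ker2)).
  split; [destruct (Rmult_integral _ _ (eq_sym D1))|destruct (Rmult_integral _ _ (eq_sym D2))];
    tauto.
Qed.

Lemma Jac_eq0_kernel f1 f2 r x y : (r = f1 \/ r = f2) -> Jac f1 f2 x y = 0 ->
  in_kerDf f1 f2 x y (- pdy r x y) (pdx r x y).
Proof. intros [-> | ->] HJ; unfold in_kerDf, Jac in *; split; lra. Qed.

Lemma positive_near (u : R -> R) : continuity_pt u 0 -> 0 < u 0 ->
  exists eps, 0 < eps /\ forall t, -eps < t < eps -> 0 < u t.
Proof.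
  intros Hc Hu; destruct (Hc (u 0 / 2) ltac:(lra)) as [al [Hal H]].
  exists al; split; [exact Hal|]; intros t Ht.
  destruct (Req_dec t 0) as [->|Ht0]; [exact Hu|].
  assert (Hr : R_dist (u t) (u 0) < u 0 / 2).
  { apply H; split; [split; [exact I|auto]|].
    unfold R_dist; simpl; unfold R_dist; rewrite Rminus_0_r; apply Rabs_def1; lra. }
  unfold R_dist in Hr; apply Rabs_def2 in Hr; lra.
Qed.

Lemma kernel_field f1 f2 g1 g2 : smooth2 f1 -> smooth2 f2 ->
  smooth1 g1 -> smooth1 g2 -> in_S1 f1 f2 (g1 0) (g2 0) ->
  (forall t, Jac f1 f2 (g1 t) (g2 t) = 0) ->
  exists eps k1 k2, 0 < eps /\ smooth1 k1 /\ smooth1 k2 /\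
    forall t, -eps < t < eps ->
      ~ (k1 t = 0 /\ k2 t = 0) /\ in_kerDf f1 f2 (g1 t) (g2 t) (k1 t) (k2 t).
Proof.
  intros S1 S2 Sg1 Sg2 [_ HS] HZ.
  assert (Hr : exists r, (r = f1 \/ r = f2) /\
                         ~ (pdx r (g1 0) (g2 0) = 0 /\ pdy r (g1 0) (g2 0) = 0)).
  { destruct (classic (pdx f1 (g1 0) (g2 0) = 0 /\ pdy f1 (g1 0) (g2 0) = 0));
      [exists f2|exists f1]; tauto. }
  destruct Hr as [r [Hr Hr0]].
  assert (Sr : smooth2 r) by (destruct Hr as [-> | ->]; assumption).
  set (k1 := fun t => - pdy r (g1 t) (g2 t)); set (k2 := fun t => pdx r (g1 t) (g2 t)).
  assert (Sk1 : smooth1 k1)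
    by (apply (smooth1_comp2 (fun x y => - pdy r x y)); auto using smooth2_opp, smooth2_pdy).
  assert (Sk2 : smooth1 k2) by (apply smooth1_comp2; auto using smooth2_pdx).
  destruct (positive_near (fun t => k1 t * k1 t + k2 t * k2 t)) as [eps [He Hpos]].
  { apply (continuity_pt_is_derive _ _ _ (Derive_correct _ _
      (ex_derive_norm2 _ _ 0 (smooth1_ex_derive _ _ Sk1) (smooth1_ex_derive _ _ Sk2)))). }
  { assert (Hk0 : ~ (k1 0 = 0 /\ k2 0 = 0)) by (unfold k1, k2; intros [? ?]; lra).
    pose proof (norm2_neq0 _ _ Hk0); pose proof (Rle_0_sqr (k1 0)); pose proof (Rle_0_sqr (k2 0)).
    unfold Rsqr in *; lra. }
  exists eps, k1, k2; do 3 (split; [assumption|]); intros t Ht; split.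
  - intros [Z1 Z2]; specialize (Hpos t Ht); simpl in Hpos; rewrite Z1, Z2 in Hpos; lra.
  - apply Jac_eq0_kernel; auto.
Qed.

Lemma cusp_criterion_simple_cusp f1 f2 x0 y0 : smooth2 f1 -> smooth2 f2 -> one_generic f1 f2 ->
  in_S1 f1 f2 x0 y0 -> cusp_criterion f1 f2 x0 y0 -> simple_cusp f1 f2 x0 y0.
Proof.
  intros S1 S2 Hgen HS1 [F1z [F2z HV]]; pose proof HS1 as [HJ HS].
  pose proof (smooth2_Jac f1 f2 S1 S2) as SJ.
  destruct (implicit_curve (Jac f1 f2) x0 y0 SJ HJ (Hgen x0 y0 HJ))
    as [g1 [g2 [Sg1 [Sg2 [E1 [E2 [Hd HZ]]]]]]].
  destruct (kernel_field f1 f2 g1 g2) as [eps [k1 [k2 [He [Sk1 [Sk2 Hk]]]]]];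
    [assumption..|rewrite E1, E2; exact HS1|exact HZ|].
  destruct (Hk 0 ltac:(lra)) as [Hk0 Ker0]; rewrite E1, E2 in Ker0.
  assert (Hh0 : dir_derive_along (Jac f1 f2) g1 g2 k1 k2 0 = 0).
  { unfold dir_derive_along; rewrite E1, E2.
    apply (dir_derive_kernel_eq0 _ f1 f2); assumption. }
  destruct (jac2_along_kernel (Jac f1 f2) f1 g1 g2 k1 k2 eps) as [_ D1];
    auto; [intros t Ht; apply (Hk t Ht)|].
  destruct (jac2_along_kernel (Jac f1 f2) f2 g1 g2 k1 k2 eps) as [_ D2];
    auto; [intros t Ht; apply (Hk t Ht)|].
  destruct (dir_derive_eq0_colinear (Jac f1 f2) x0 y0 (Derive g1 0) (Derive g2 0))
    as [l [L1 L2]]; [apply Hgen, HJ|rewrite <- E1, <- E2; eapply dir_derive_tangent; eauto|].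
  assert (Hl : l <> 0) by (intros ->; apply Hd; rewrite L1, L2; split; ring).
  rewrite E1, E2, L1, L2, dir_derive_scal in D1, D2.
  split; [exact HS1|]; exists eps, g1, g2, k1, k2.
  do 8 (split; [assumption|]); split; [intros t Ht; split; [apply HZ|apply Hk, Ht]|split].
  - (* Df(p) (-J_y, J_x) = F(p) = 0 *)
    rewrite L1, L2; split;
      [change (dir_derive f1 x0 y0 (l * - pdy (Jac f1 f2) x0 y0) (l * pdx (Jac f1 f2) x0 y0) = 0)
      |change (dir_derive f2 x0 y0 (l * - pdy (Jac f1 f2) x0 y0) (l * pdx (Jac f1 f2) x0 y0) = 0)];
      rewrite dir_derive_scal, <- jac2_dir_derive;
      [change (l * Ffun f1 f2 f1 x0 y0 = 0)|change (l * Ffun f1 f2 f2 x0 y0 = 0)];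
      [rewrite F1z|rewrite F2z]; ring.
  - split; [exact Hh0|].
    change (Derive (dir_derive_along (Jac f1 f2) g1 g2 k1 k2) 0 <> 0).
    pose proof (norm2_neq0 _ _ Hk0) as N0.
    intros Z; rewrite Z in D1, D2; apply HV.
    split; apply (Rmult_eq_reg_l l); auto; apply (Rmult_eq_reg_r (k1 0 * k1 0 + k2 0 * k2 0)); auto;
      unfold Ffun; lra.
Qed.

Theorem mainTheorem7 (f1 f2 : R -> R -> R) :
  smooth2 f1 -> smooth2 f2 -> one_generic f1 f2 ->
  forall x0 y0 : R, in_S1 f1 f2 x0 y0 ->
    (simple_cusp f1 f2 x0 y0 <->
       (Ffun f1 f2 f1 x0 y0 = 0 /\ Ffun f1 f2 f2 x0 y0 = 0 /\
        ~ (pdx (Ffun f1 f2 f1) x0 y0 * (- pdy (Jac f1 f2) x0 y0)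
             + pdy (Ffun f1 f2 f1) x0 y0 * pdx (Jac f1 f2) x0 y0 = 0 /\
           pdx (Ffun f1 f2 f2) x0 y0 * (- pdy (Jac f1 f2) x0 y0)
             + pdy (Ffun f1 f2 f2) x0 y0 * pdx (Jac f1 f2) x0 y0 = 0))) /\
    (simple_cusp f1 f2 x0 y0 <->
       (Jac f1 f2 x0 y0 = 0 /\ Ffun f1 f2 f1 x0 y0 = 0 /\ Ffun f1 f2 f2 x0 y0 = 0 /\
        (jac2 (Jac f1 f2) (Ffun f1 f2 f1) x0 y0 <> 0 \/
         jac2 (Jac f1 f2) (Ffun f1 f2 f2) x0 y0 <> 0))).
Proof.
  intros S1 S2 Hgen x0 y0 HS1.
  assert (Crit : simple_cusp f1 f2 x0 y0 <-> cusp_criterion f1 f2 x0 y0).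
  { split; [apply simple_cusp_criterion|apply cusp_criterion_simple_cusp]; assumption. }
  split; [exact Crit|].
  rewrite Crit; unfold cusp_criterion.
  rewrite (jac2_dir_derive _ (Ffun f1 f2 f1)), (jac2_dir_derive _ (Ffun f1 f2 f2)).
  destruct HS1 as [HJ _]; split.
  - intros [F1 [F2 V]]; repeat split; auto; apply not_and_or, V.
  - intros [_ [F1 [F2 V]]]; repeat split; auto; tauto.
Qed.
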